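(* Let $V>0$, $C_0>0$, $A>0$, $0<\delta<1$ with $\delta\neq\frac14$, and $\epsilon$ with $\frac{4\delta}{3\delta+1}\le\epsilon<1$. Let $R\ge2$, and let $E,y:[R,\infty)\to\mathbb R$ be functions with the following properties: 1. $E-y$ is continuous and piecewise differentiable, with $\frac{d(E-y)}{dr}=\frac{y}{r}$ wherever it is differentiable; 2. $|y(r)|\le C_0r^{-1/3}|E(r)|^{4/3}$ for all $r\ge R$; 3. $|E(r)-RV|\le A(r^\delta+R^\epsilon)$ for all $r\ge R$. Then there is a constant $A'$ depending only on $V,C_0,A,\delta,\epsilon$ (not on $R$, $E$, $y$) such that $$|E(r)-RV|\le A'\left(r^{\frac43\delta-\frac13}+R^\epsilon\right)\qquad\text{for all } r\ge R.$$
   Context: In the paper this is applied with $R=r_k$, $V=\mathrm{Vol}(Y)$, $E=\hat E$ the energy of the min-max generator, and $y=y_2=(\hat{cs}+2\hat e_\mu)/r$. *)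

From Stdlib Require Import Reals List.
Open Scope R_scope.

Definition continuous_on_halfline (F : R -> R) (R0 : R) : Prop :=
  forall x, R0 <= x ->
    forall eps, 0 < eps -> exists d, 0 < d /\
      forall z, R0 <= z -> Rabs (z - x) < d -> Rabs (F z - F x) < eps.

Definition piecewise_differentiable_on_halfline (F : R -> R) (R0 : R) : Prop :=
  forall b, exists L : list R,
    forall x, R0 < x < b -> ~ In x L -> exists l, derivable_pt_lim F x l.

Definition hyp_ode (E y : R -> R) (R0 : R) : Prop :=
  let F := fun r => E r - y r in
  continuous_on_halfline F R0 /\
  piecewise_differentiable_on_halfline F R0 /\
  (forall x l, R0 < x -> derivable_pt_lim F x l -> l = y x / x).

(* Real power x^a for x >= 0, with the convention 0^a = 0 (a > 0).
   Stdlib's Rpower 0 a = exp (a * ln 0) = 1, which is wrong at 0. *)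
Definition rpow (x a : R) : R := if Rle_dec x 0 then 0 else Rpower x a.

(* Inserting the a priori bound |E - R V| <= A (r^delta + R^eps) into
   |y| <= C0 r^(-1/3) |E|^(4/3) gives |y(s)| <= c (R^(4/3) s^(-1/3) + s^p) with
   p = 4 delta / 3 - 1/3.  Up to r1 = R^(4/(3 delta + 1)) the a priori bound is
   already O(R^eps), since r1^delta <= R^eps.  Beyond r1 the function F = E - y
   satisfies |F'| = |y|/s, which is dominated by the derivative of an explicit
   primitive G (it exists as a power because delta <> 1/4, i.e. p <> 0), so
   G - F and G + F are nondecreasing and |F(r) - F(r1)| <= G(r) - G(r1) =
   O(r^p + R^eps); writing E = F + y transfers this bound to E. *)

From Stdlib Require Import Reals Lra List.
From Coquelicot Require Import Coquelicot.
Open Scope R_scope.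

Lemma nondecreasing_of_derive_nonneg (H : R -> R) (a b : R) : a <= b ->
  (forall x, a <= x <= b -> continuity_pt H x) ->
  (forall x, a < x < b -> exists l, derivable_pt_lim H x l /\ 0 <= l) ->
  H a <= H b.
Proof.
intros hab hcont hder.
(* Clipping at 0 makes the MVT slope nonnegative even at the endpoints. *)
destruct (MVT_gen H a b (fun x => Rmax 0 (Derive H x))) as [c [_ hc]];
  rewrite ?(Rmin_left a b hab), ?(Rmax_right a b hab); auto.
- intros x hx. destruct (hder x hx) as [l [hl hl0]].
  apply is_derive_Reals in hl. rewrite (is_derive_unique _ _ _ hl), Rmax_right; auto.
- assert (0 <= Rmax 0 (Derive H c) * (b - a)) by (apply Rmult_le_pos; [apply Rmax_l | lra]).
  lra.
Qed.

Lemma nondecreasing_of_derive_nonneg_off (H : R -> R) (L : list R) (a b : R) :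
  a <= b ->
  (forall x, a <= x <= b -> continuity_pt H x) ->
  (forall x, a < x < b -> ~ In x L -> exists l, derivable_pt_lim H x l /\ 0 <= l) ->
  H a <= H b.
Proof.
revert a b. induction L as [|z L IH]; intros a b hab hcont hder.
- apply nondecreasing_of_derive_nonneg; auto.
- assert (hder' : forall u v, a <= u -> v <= b -> forall x, u < x < v -> x <> z -> ~ In x L ->
            exists l, derivable_pt_lim H x l /\ 0 <= l).
  { intros u v hu hv x hx hxz hxL. apply hder; [lra |]. intros [e | e]; auto. }
  destruct (Rle_lt_dec z a) as [hza | haz]; [| destruct (Rle_lt_dec b z) as [hbz | hzb]].
  + apply IH; auto. intros x hx. apply (hder' a b); lra.
  + apply IH; auto. intros x hx. apply (hder' a b); lra.
  + apply Rle_trans with (H z); apply IH; try lra;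
      try (intros x hx; apply hcont; lra); intros x hx; [apply (hder' a z) | apply (hder' z b)]; lra.
Qed.

Lemma Rabs_increment_le_of_dominated_derive (F G G' : R -> R) (L : list R) (a b : R) :
  a <= b ->
  (forall x, a <= x <= b -> continuity_pt F x) ->
  (forall x, a <= x <= b -> continuity_pt G x) ->
  (forall x, a < x < b -> derivable_pt_lim G x (G' x)) ->
  (forall x, a < x < b -> ~ In x L -> exists l, derivable_pt_lim F x l /\ Rabs l <= G' x) ->
  Rabs (F b - F a) <= G b - G a.
Proof.
intros hab hF hG hG' hF'.
assert (hminus : G a - F a <= G b - F b).
{ apply (nondecreasing_of_derive_nonneg_off (fun s => G s - F s) L); auto.
  - intros x hx. apply continuity_pt_minus; auto.
  - intros x hx hxL. destruct (hF' x hx hxL) as [l [hl hla]].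
    exists (G' x - l). split; [apply derivable_pt_lim_minus; auto |].
    pose proof (Rle_abs l). lra. }
assert (hplus : G a + F a <= G b + F b).
{ apply (nondecreasing_of_derive_nonneg_off (fun s => G s + F s) L); auto.
  - intros x hx. apply continuity_pt_plus; auto.
  - intros x hx hxL. destruct (hF' x hx hxL) as [l [hl hla]].
    exists (G' x + l). split; [apply derivable_pt_lim_plus; auto |].
    pose proof (Rle_abs (- l)). rewrite Rabs_Ropp in *. lra. }
apply Rabs_le. lra.
Qed.

Lemma continuity_pt_of_halfline (F : R -> R) (R0 x : R) :
  continuous_on_halfline F R0 -> R0 < x -> continuity_pt F x.
Proof.
intros hF hx e he. destruct (hF x (Rlt_le _ _ hx) e he) as [d [hd hFd]].
exists (Rmin d (x - R0)). split; [apply Rmin_pos; lra |].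
intros z [_ hz]. simpl in *. unfold R_dist in *.
pose proof (Rmin_l d (x - R0)). pose proof (Rmin_r d (x - R0)).
apply hFd; [apply Rabs_def2 in hz |]; lra.
Qed.

Lemma Rpower_gt0 (x y : R) : 0 < Rpower x y.
Proof. apply exp_pos. Qed.

Lemma Rpower_ge1 (x y : R) : 1 <= x -> 0 <= y -> 1 <= Rpower x y.
Proof. intros hx hy. rewrite <- (Rpower_O x) by lra. apply Rle_Rpower; lra. Qed.

Lemma Rle_Rpower_l_opp (a b c : R) : 0 <= c -> 0 < a <= b -> Rpower b (- c) <= Rpower a (- c).
Proof.
intros hc hab. rewrite !Rpower_Ropp. apply Rinv_le_contravar; [apply Rpower_gt0 |].
apply Rle_Rpower_l; lra.
Qed.

Lemma Rpower_minus1 (x a : R) : 0 < x -> Rpower x (a - 1) = Rpower x a / x.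
Proof. intros hx. unfold Rminus. rewrite Rpower_plus, Rpower_Ropp, Rpower_1 by lra. reflexivity. Qed.

Lemma Rpower_sub_div_le (a b p : R) : 1 <= a -> p <> 0 ->
  (Rpower b p - Rpower a p) / p <= (Rpower b p + 1) / Rabs p.
Proof.
intros ha hp. pose proof (Rpower_gt0 a p). pose proof (Rpower_gt0 b p).
destruct (Rle_lt_dec p 0) as [hpn | hpp].
- assert (Rpower a p <= 1) by (rewrite <- (Rpower_O a) by lra; apply Rle_Rpower; lra).
  rewrite Rabs_left by lra.
  replace ((Rpower b p - Rpower a p) / p) with ((Rpower a p - Rpower b p) / - p) by (field; lra).
  apply Rmult_le_compat_r; [apply Rlt_le, Rinv_0_lt_compat |]; lra.
- rewrite Rabs_right by lra.
  apply Rmult_le_compat_r; [apply Rlt_le, Rinv_0_lt_compat |]; lra.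
Qed.

Lemma rpow_le_Rpower (x M a : R) : 0 <= x <= M -> 0 <= a -> rpow x a <= Rpower M a.
Proof.
intros hx ha. unfold rpow. destruct (Rle_dec x 0).
- apply Rlt_le, Rpower_gt0.
- apply Rle_Rpower_l; lra.
Qed.

Lemma Rabs_sub_add3_le (a b u v : R) : Rabs (a + b + u - v) <= Rabs a + Rabs b + Rabs u + Rabs v.
Proof.
pose proof (Rabs_triang a b). pose proof (Rabs_triang (a + b) u).
pose proof (Rabs_triang (a + b + u) (- v)). rewrite Rabs_Ropp in *. unfold Rminus. lra.
Qed.

Section Bootstrap.

Variables (V C0 A delta eps R0 : R).
Hypotheses (hV : 0 < V) (hC0 : 0 < C0) (hA : 0 < A) (hdelta : 0 < delta < 1)
  (hdelta4 : delta <> 1/4) (heps : 4 * delta / (3 * delta + 1) <= eps < 1) (hR0 : 2 <= R0).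

Definition bootstrap_exponent : R := 4/3 * delta - 1/3.

Definition y_coeff : R := C0 * Rpower (2 * (V + A)) (4/3).

(* Chosen so that s^delta <= R0^eps for s <= switch_radius and
   R0^(4/3) s^(-1/3) <= R0^eps for s >= switch_radius. *)
Definition switch_radius : R := Rpower R0 (4 / (3 * delta + 1)).

Definition bootstrap_constant : R :=
  2 * A + 7 * y_coeff + y_coeff / Rabs bootstrap_exponent.

Definition y_majorant_primitive (s : R) : R :=
  y_coeff * (-3 * Rpower R0 (4/3) * Rpower s (-(1/3))
             + / bootstrap_exponent * Rpower s bootstrap_exponent).

Local Notation p := bootstrap_exponent.
Local Notation c := y_coeff.
Local Notation r1 := switch_radius.
Local Notation Re := (Rpower R0 eps).

Lemma bootstrap_exponent_neq0 : p <> 0.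
Proof. unfold bootstrap_exponent. intro. apply hdelta4. lra. Qed.

Lemma y_coeff_gt0 : 0 < c.
Proof. apply Rmult_lt_0_compat; [lra | apply Rpower_gt0]. Qed.

Lemma eps_ge0 : 0 <= eps.
Proof.
assert (0 <= 4 * delta / (3 * delta + 1)) by (apply Rlt_le, Rdiv_lt_0_compat; lra). lra.
Qed.

Lemma R0_eps_ge1 : 1 <= Re.
Proof. apply Rpower_ge1; [lra | apply eps_ge0]. Qed.

Lemma R0_eps_le_R0 : Re <= R0.
Proof. rewrite <- (Rpower_1 R0) at 2 by lra. apply Rle_Rpower; lra. Qed.

Lemma R0_lt_switch_radius : R0 < r1.
Proof.
unfold switch_radius. rewrite <- (Rpower_1 R0) at 1 by lra.
apply Rpower_lt; [lra |]. apply (Rmult_lt_reg_r (3 * delta + 1)); [lra |].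
unfold Rdiv. rewrite Rmult_assoc, Rinv_l; lra.
Qed.

Lemma switch_radius_delta : Rpower r1 delta <= Re.
Proof.
unfold switch_radius. rewrite Rpower_mult. apply Rle_Rpower; [lra |].
replace (4 / (3 * delta + 1) * delta) with (4 * delta / (3 * delta + 1)) by (field; lra). lra.
Qed.

Lemma switch_radius_tail (s : R) : r1 <= s -> Rpower R0 (4/3) * Rpower s (-(1/3)) <= Re.
Proof.
intros hs. pose proof R0_lt_switch_radius.
apply Rle_trans with (Rpower R0 (4/3) * Rpower r1 (-(1/3))).
- apply Rmult_le_compat_l; [apply Rlt_le, Rpower_gt0 | apply Rle_Rpower_l_opp; lra].
- unfold switch_radius. rewrite Rpower_mult, <- Rpower_plus. apply Rle_Rpower; [lra |].
  replace (4/3 + 4 / (3 * delta + 1) * -(1/3)) with (4 * delta / (3 * delta + 1)) by (field; lra).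
  lra.
Qed.

Lemma derivable_pt_lim_y_majorant_primitive (s : R) : 0 < s ->
  derivable_pt_lim y_majorant_primitive s
    (c * (Rpower R0 (4/3) * Rpower s (-(1/3)) + Rpower s p) / s).
Proof.
intros hs. pose proof bootstrap_exponent_neq0.
replace (c * (Rpower R0 (4/3) * Rpower s (-(1/3)) + Rpower s p) / s) with
  (c * (-3 * Rpower R0 (4/3) * (-(1/3) * Rpower s (-(1/3) - 1)) + / p * (p * Rpower s (p - 1))))
  by (rewrite !Rpower_minus1 by lra; field; lra).
change (derivable_pt_lim (mult_real_fct c (plus_fct
  (mult_real_fct (-3 * Rpower R0 (4/3)) (fun s => Rpower s (-(1/3))))
  (mult_real_fct (/ p) (fun s => Rpower s p)))) s
  (c * (-3 * Rpower R0 (4/3) * (-(1/3) * Rpower s (-(1/3) - 1)) + / p * (p * Rpower s (p - 1))))).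
repeat first [apply derivable_pt_lim_scal | apply derivable_pt_lim_plus];
  apply derivable_pt_lim_power; exact hs.
Qed.

Lemma y_majorant_primitive_increment (r : R) : r1 <= r ->
  y_majorant_primitive r - y_majorant_primitive r1 <= c * (3 * Re + (Rpower r p + 1) / Rabs p).
Proof.
intros hr. pose proof R0_lt_switch_radius. pose proof y_coeff_gt0.
pose proof (switch_radius_tail r1 (Rle_refl _)).
pose proof (Rpower_sub_div_le r1 r p ltac:(lra) bootstrap_exponent_neq0).
assert (0 < Rpower R0 (4/3) * Rpower r (-(1/3))) by (apply Rmult_lt_0_compat; apply Rpower_gt0).
unfold y_majorant_primitive.
replace (c * (-3 * Rpower R0 (4/3) * Rpower r (-(1/3)) + / p * Rpower r p) -
         c * (-3 * Rpower R0 (4/3) * Rpower r1 (-(1/3)) + / p * Rpower r1 p))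
  with (c * (3 * (Rpower R0 (4/3) * Rpower r1 (-(1/3))) - 3 * (Rpower R0 (4/3) * Rpower r (-(1/3)))
             + (Rpower r p - Rpower r1 p) / p))
  by (field; apply bootstrap_exponent_neq0).
apply Rmult_le_compat_l; lra.
Qed.

Variables (E y : R -> R).
Hypotheses (hode : hyp_ode E y R0)
  (hy : forall r, R0 <= r -> Rabs (y r) <= C0 * Rpower r (-(1/3)) * rpow (Rabs (E r)) (4/3))
  (hE : forall r, R0 <= r -> Rabs (E r - R0 * V) <= A * (Rpower r delta + Rpower R0 eps)).

Lemma Rabs_E_le_max (s : R) : R0 <= s -> Rabs (E s) <= 2 * (V + A) * Rmax R0 (Rpower s delta).
Proof.
intros hs. pose proof (hE s hs) as hEs. apply Rabs_le_between in hEs.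
pose proof R0_eps_le_R0. pose proof (Rpower_gt0 R0 eps).
pose proof (Rmax_l R0 (Rpower s delta)). pose proof (Rmax_r R0 (Rpower s delta)).
set (m := Rmax R0 (Rpower s delta)) in *.
assert (0 <= V * (m - R0)) by (apply Rmult_le_pos; lra).
assert (0 <= A * (m - Rpower s delta)) by (apply Rmult_le_pos; lra).
assert (0 <= A * (m - Rpower R0 eps)) by (apply Rmult_le_pos; lra).
assert (0 <= R0 * V) by (apply Rmult_le_pos; lra).
apply Rabs_le. split; lra.
Qed.

Lemma Rabs_y_le (s : R) : R0 <= s ->
  Rabs (y s) <= c * (Rpower R0 (4/3) * Rpower s (-(1/3)) + Rpower s p).
Proof.
intros hs. set (m := Rmax R0 (Rpower s delta)).
assert (hm0 : 0 < m) by (apply Rlt_le_trans with R0; [lra | apply Rmax_l]).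
assert (hm : Rpower m (4/3) <= Rpower R0 (4/3) + Rpower s (4/3 * delta)).
{ pose proof (Rpower_gt0 R0 (4/3)). pose proof (Rpower_gt0 s (4/3 * delta)).
  unfold m, Rmax. destruct (Rle_dec R0 (Rpower s delta)); [| lra].
  rewrite Rpower_mult, Rmult_comm. lra. }
assert (hrpow : rpow (Rabs (E s)) (4/3) <= Rpower (2 * (V + A)) (4/3) * Rpower m (4/3)).
{ rewrite Rpower_mult_distr by lra.
  apply rpow_le_Rpower; [split; [apply Rabs_pos | apply Rabs_E_le_max] |]; lra. }
assert (hsp : Rpower s p = Rpower s (-(1/3)) * Rpower s (4/3 * delta)).
{ rewrite <- Rpower_plus. f_equal. unfold bootstrap_exponent. ring. }
pose proof (Rpower_gt0 s (-(1/3))). pose proof (Rpower_gt0 (2 * (V + A)) (4/3)).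
eapply Rle_trans; [apply hy; exact hs |].
rewrite hsp. unfold y_coeff.
apply Rle_trans with (C0 * Rpower s (-(1/3)) * (Rpower (2 * (V + A)) (4/3) * Rpower m (4/3))).
- apply Rmult_le_compat_l; [apply Rlt_le, Rmult_lt_0_compat |]; lra.
- replace (C0 * Rpower (2 * (V + A)) (4/3) *
    (Rpower R0 (4/3) * Rpower s (-(1/3)) + Rpower s (-(1/3)) * Rpower s (4/3 * delta)))
  with (C0 * Rpower s (-(1/3)) * (Rpower (2 * (V + A)) (4/3) * (Rpower R0 (4/3) + Rpower s (4/3 * delta))))
  by ring.
  apply Rmult_le_compat_l; [apply Rlt_le, Rmult_lt_0_compat |]; [lra | lra |].
  apply Rmult_le_compat_l; lra.
Qed.

Lemma bootstrap_near (r : R) : R0 <= r <= r1 ->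
  Rabs (E r - R0 * V) <= bootstrap_constant * (Rpower r p + Re).
Proof.
intros hr. pose proof R0_eps_ge1. pose proof y_coeff_gt0. pose proof (Rpower_gt0 r p).
assert (Rpower r delta <= Re).
{ eapply Rle_trans; [apply Rle_Rpower_l | apply switch_radius_delta]; lra. }
assert (0 < c / Rabs p)
  by (apply Rdiv_lt_0_compat, Rabs_pos_lt, bootstrap_exponent_neq0; assumption).
eapply Rle_trans; [apply hE; lra |].
unfold bootstrap_constant.
apply Rle_trans with ((2 * A) * (Rpower r p + Re)); [nra |].
apply Rmult_le_compat_r; lra.
Qed.

Lemma Rabs_increment_E_sub_y_le (r : R) : r1 <= r ->
  Rabs ((E r - y r) - (E r1 - y r1)) <= c * (3 * Re + (Rpower r p + 1) / Rabs p).
Proof.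
intros hr. pose proof R0_lt_switch_radius.
destruct hode as [hcont [hpw hder]]. destruct (hpw (r + 1)) as [L hL].
eapply Rle_trans; [| apply y_majorant_primitive_increment; exact hr].
apply (Rabs_increment_le_of_dominated_derive (fun s => E s - y s) _
  (fun s => c * (Rpower R0 (4/3) * Rpower s (-(1/3)) + Rpower s p) / s) L); [exact hr | | | |].
- intros x hx. apply (continuity_pt_of_halfline _ R0); [exact hcont | lra].
- intros x hx. apply derivable_continuous_pt.
  eexists. apply derivable_pt_lim_y_majorant_primitive; lra.
- intros x hx. apply derivable_pt_lim_y_majorant_primitive; lra.
- intros x hx hxL. destruct (hL x ltac:(lra) hxL) as [l hl]. exists l. split; [exact hl |].
  rewrite (hder x l ltac:(lra) hl). unfold Rdiv.
  rewrite Rabs_mult, Rabs_inv, (Rabs_right x) by lra.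
  apply Rmult_le_compat_r; [apply Rlt_le, Rinv_0_lt_compat; lra |].
  apply Rabs_y_le; lra.
Qed.

Lemma bootstrap_far (r : R) : r1 <= r ->
  Rabs (E r - R0 * V) <= bootstrap_constant * (Rpower r p + Re).
Proof.
intros hr. pose proof R0_lt_switch_radius. pose proof R0_eps_ge1. pose proof y_coeff_gt0.
pose proof (Rpower_gt0 r p).
assert (hyr : Rabs (y r) <= c * (Re + Rpower r p)).
{ eapply Rle_trans; [apply Rabs_y_le; lra |].
  apply Rmult_le_compat_l; [lra |]. apply Rplus_le_compat_r, switch_radius_tail; exact hr. }
assert (hyr1 : Rabs (y r1) <= c * (Re + Re)).
{ eapply Rle_trans; [apply Rabs_y_le; lra |]. apply Rmult_le_compat_l; [lra |].
  assert (Rpower r1 p <= Rpower r1 delta).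
  { apply Rle_Rpower; [lra | unfold bootstrap_exponent; lra]. }
  pose proof switch_radius_delta. pose proof (switch_radius_tail r1 (Rle_refl _)). lra. }
assert (hEr1 : Rabs (E r1 - R0 * V) <= A * (Re + Re)).
{ eapply Rle_trans; [apply hE; lra |].
  apply Rmult_le_compat_l; [lra | pose proof switch_radius_delta; lra]. }
pose proof (Rabs_increment_E_sub_y_le r hr) as hF.
set (ip := / Rabs p).
assert (0 < ip) by (apply Rinv_0_lt_compat, Rabs_pos_lt, bootstrap_exponent_neq0; assumption).
assert (0 <= c * ip * (Re - 1)) by (apply Rmult_le_pos; [apply Rmult_le_pos |]; lra).
replace (E r - R0 * V) with ((E r1 - R0 * V) + ((E r - y r) - (E r1 - y r1)) + y r - y r1) by ring.
unfold bootstrap_constant, Rdiv in *. fold ip in hF |- *.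
eapply Rle_trans; [apply Rabs_sub_add3_le |].
assert (0 <= A * Rpower r p) by (apply Rmult_le_pos; lra).
assert (0 <= c * Rpower r p) by (apply Rmult_le_pos; lra).
assert (0 <= c * Re) by (apply Rmult_le_pos; lra).
lra.
Qed.

End Bootstrap.

Theorem mainTheorem11 (V C0 A delta eps : R)
  (hV : 0 < V) (hC0 : 0 < C0) (hA : 0 < A)
  (hdelta : 0 < delta < 1) (hdelta4 : delta <> 1/4)
  (heps : 4 * delta / (3 * delta + 1) <= eps < 1) :
  exists A' : R,
    forall (R0 : R) (E y : R -> R),
      2 <= R0 ->
      hyp_ode E y R0 ->
      (forall r, R0 <= r ->
         Rabs (y r) <= C0 * Rpower r (-(1/3)) * rpow (Rabs (E r)) (4/3)) ->
      (forall r, R0 <= r ->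
         Rabs (E r - R0 * V) <= A * (Rpower r delta + Rpower R0 eps)) ->
      forall r, R0 <= r ->
        Rabs (E r - R0 * V) <=
          A' * (Rpower r (4/3 * delta - 1/3) + Rpower R0 eps).
Proof.
exists (bootstrap_constant V C0 A delta).
intros R0 E y hR0 hode hy hE r hr.
destruct (Rle_lt_dec r (switch_radius delta R0)) as [hnear | hfar].
- apply bootstrap_near; auto.
- apply bootstrap_far with (y := y); auto. lra.
Qed.
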